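(* Let $N\ge 3$ and consider a smooth field $u:\mathbb{R}^N\to\mathbb{R}$ with $t_1=x$ the space variable, and a hierarchy of evolutionary equations \[ u_{t_i}=Q_i(u_1,u_{11},\ldots),\qquad i=2,\ldots,N, \] where $Q_i$ depends only on $t_1$-derivatives of $u$. Let $L_{1i}$, $i=2,\ldots,N$, be Lagrangians of the form \[ L_{1i}[u]=p(u,u_1,u_{11},\ldots)\,u_{t_i}-h_i(u,u_1,u_{11},\ldots), \] with the same function $p$ for all $i$, whose Euler–Lagrange equations $\frac{\delta_{1i}L_{1i}}{\delta u}=0$ are of the form $\mathcal{E}_p(u_{t_i}-Q_i)=0$ for some differential operator $\mathcal{E}_p$. Assume that the prolonged vector fields $\mathfrak{D}_i=\mathrm{pr}(Q_i\partial_u)$, $i=2,\ldots,N$, commute pairwise and are variational symmetries of the Lagrangians, i.e. for all $i\ne j$ in $\{2,\ldots,N\}$ \[ \mathfrak{D}_i L_{1j}=\mathrm{D}_1A_{ij}+\mathrm{D}_jB_{ij} \] for some functions $A_{ij},B_{ij}:\mathcal{J}^\infty\to\mathbb{R}$. Then for all $i\ne j$ in $\{2,\ldots,N\}$ there exist functions $F_{ij}:\mathcal{J}^\infty\to\mathbb{R}$ of the form $F_{ij}=F_{ij}(u,u_1,u_{11},\ldots)$ (not depending on any time derivatives) such that \[ \mathrm{D}_1F_{ij}=\mathrm{D}_iL_{1j}-\mathrm{D}_jL_{1i} \] on solutions of the hierarchy.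
   Context: Subscripts $1,11,\ldots$ denote derivatives with respect to $t_1$ (e.g. $u_{11}=\partial^2u/\partial t_1^2$), and $u_{t_i}$ the derivative with respect to $t_i$. $\mathcal{J}^\infty$ denotes the fiber of the infinite jet bundle, with coordinates all partial derivatives $u_I$ of $u$, $I\in\mathbb{N}^N$ a multi-index. Total derivatives: $\mathrm{D}_i=\sum_I u_{It_i}\partial/\partial u_I$, $\mathrm{D}_I=\mathrm{D}_1^{i_1}\cdots\mathrm{D}_N^{i_N}$. For $Q:\mathcal{J}^\infty\to\mathbb{R}$, the prolongation is $\mathrm{pr}(Q\partial_u)=\sum_I(\mathrm{D}_IQ)\,\partial/\partial u_I$. The variational derivative in the $(t_i,t_j)$-plane is $\frac{\delta_{ij}L}{\delta u_I}=\sum_{\alpha,\beta\ge0}(-1)^{\alpha+\beta}\mathrm{D}_i^\alpha\mathrm{D}_j^\beta\big(\partial L/\partial u_{It_i^\alpha t_j^\beta}\big)$. *)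

From Stdlib Require Import Reals List Arith.
From Coquelicot Require Import Coquelicot.
Import ListNotations.
Open Scope R_scope.

(* A multi-index I in N^N is a list of naturals of length N;
   position k (0-based) counts derivatives w.r.t. t_{k+1}.  So position 0
   is t_1 = x, and the paper's t_i (i = 2..N) is position i-1.          *)
Definition MI := list nat.
Definition MI_eq_dec : forall I K : MI, {I = K} + {I <> K} :=
  list_eq_dec Nat.eq_dec.

(* a point of the fiber J^infty : the value of every coordinate u_I *)
Definition J := MI -> R.

Fixpoint incr (k : nat) (I : MI) : MI :=
  match I, k with
  | nil, _ => nil
  | a :: l, O => S a :: l
  | a :: l, S k' => a :: incr k' l
  end.

Definition zeroMI (N : nat) : MI := repeat 0%nat N.
(* the multi-index of the coordinate u_{t_k} (k 0-based) *)
Definition eMI (N k : nat) : MI := incr k (zeroMI N).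

Definition xonly (N : nat) (I : MI) : Prop :=
  length I = N /\ forall k, (0 < k)%nat -> nth k I 0%nat = 0%nat.

Definition upd (v : J) (I : MI) (s : R) : J :=
  fun K => if MI_eq_dec K I then s else v K.

Definition pd (I : MI) (f : J -> R) : J -> R :=
  fun v => Derive (fun s => f (upd v I s)) (v I).

Fixpoint iter_pd (l : list MI) (f : J -> R) : J -> R :=
  match l with nil => f | K :: l0 => pd K (iter_pd l0 f) end.

(* A (candidate) differential function: a finite list of coordinates it
   may depend on, together with the function on J^infty. *)
Record DF := mkDF { supp : list MI ; fn : J -> R }.

Definition cont_on (S : list MI) (g : J -> R) : Prop :=
  forall v eps, 0 < eps -> exists delta, 0 < delta /\
    forall w, (forall I, In I S -> Rabs (w I - v I) < delta) ->
      Rabs (g w - g v) < eps.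

Definition smooth_on (S : list MI) (f : J -> R) : Prop :=
  forall l : list MI,
    (forall I v, ex_derive (fun s => iter_pd l f (upd v I s)) (v I)) /\
    cont_on S (iter_pd l f).

Definition is_dfun (N : nat) (F : DF) : Prop :=
  List.Forall (fun I => length I = N) (supp F) /\
  (forall v w, (forall I, In I (supp F) -> v I = w I) -> fn F v = fn F w) /\
  smooth_on (supp F) (fn F).

Definition sumL (l : list MI) (g : MI -> R) : R :=
  fold_right (fun I acc => g I + acc) 0 (nodup MI_eq_dec l).

Definition coordF (K : MI) : DF := mkDF (K :: nil) (fun v => v K).
Definition addDF (F G : DF) : DF := mkDF (supp F ++ supp G) (fun v => fn F v + fn G v).
Definition subDF (F G : DF) : DF := mkDF (supp F ++ supp G) (fun v => fn F v - fn G v).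
Definition mulDF (F G : DF) : DF := mkDF (supp F ++ supp G) (fun v => fn F v * fn G v).
Definition pdF (I : MI) (F : DF) : DF := mkDF (supp F) (pd I (fn F)).

Definition Dt (k : nat) (F : DF) : DF :=
  mkDF (supp F ++ map (incr k) (supp F))
       (fun v => sumL (supp F) (fun I => v (incr k I) * pd I (fn F) v)).

(* D_I = D_1^{i_1} ... D_N^{i_N} *)
Fixpoint Dmulti_aux (k : nat) (I : MI) (F : DF) : DF :=
  match I with
  | nil => F
  | a :: l => Dmulti_aux (S k) l (Nat.iter a (Dt k) F)
  end.
Definition Dmulti (I : MI) (F : DF) : DF := Dmulti_aux 0 I F.

(* prolongation pr(Q d_u) = sum_I (D_I Q) d/du_I *)
Definition prD (Q F : DF) : DF :=
  mkDF (supp F ++ concat (map (fun I => supp (Dmulti I Q)) (supp F)))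
       (fun v => sumL (supp F) (fun I => fn (Dmulti I Q) v * pd I (fn F) v)).

(* a linear differential operator  E = sum_K a_K D_K *)
Definition DOp := list (MI * DF).
Definition applyOp (E : DOp) (G : DF) : DF :=
  mkDF (concat (map (fun p => supp (snd p) ++ supp (Dmulti (fst p) G)) E))
       (fun v => fold_right (fun p acc => fn (snd p) v * fn (Dmulti (fst p) G) v + acc) 0 E).

Definition is_DOp (N : nat) (E : DOp) : Prop :=
  List.Forall (fun p => length (fst p) = N /\ is_dfun N (snd p)) E.

(* variational derivative delta_{ij} L / delta u in the (t_i,t_j)-plane
   (0-based i j).  The infinite sum over alpha, beta is truncated at the
   maximal total order M of the coordinates L depends on; all further
   terms vanish identically. *)
Definition ordMI (I : MI) : nat := fold_right Nat.add 0%nat I.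
Definition maxord (F : DF) : nat := fold_right (fun I m => Nat.max (ordMI I) m) 0%nat (supp F).
Definition sumN (M : nat) (g : nat -> R) : R :=
  fold_right (fun a acc => g a + acc) 0 (seq 0 (S M)).

Definition varder (N i j : nat) (L : DF) : J -> R :=
  fun v => let M := maxord L in
    sumN M (fun a => sumN M (fun b =>
      (-1) ^ (a + b) *
      fn (Nat.iter a (Dt i) (Nat.iter b (Dt j)
            (pdF (Nat.iter a (incr i) (Nat.iter b (incr j) (zeroMI N))) L))) v)).

(* the Lagrangian L_{1i} = p u_{t_i} - h_i  (i 0-based, 1 <= i < N) *)
Definition Lag (N : nat) (p h : DF) (i : nat) : DF :=
  subDF (mulDF p (coordF (eMI N i))) h.

(* v lies on the (infinitely prolonged) solution set of the hierarchy
   u_{t_i} = Q_i, i = 1..N-1 (0-based): u_{I t_i} = D_I Q_i for all I *)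
Definition on_shell (N : nat) (Q : nat -> DF) (v : J) : Prop :=
  forall I : MI, length I = N -> forall i, (1 <= i < N)%nat ->
    v (incr i I) = fn (Dmulti I (Q i)) v.

From Stdlib Require Import Reals List Arith Lia Lra Permutation FunctionalExtensionality.
From Coquelicot Require Import Coquelicot.
Import ListNotations.
Open Scope R_scope.

(* On shell a time derivative of an x-only function is its prolonged flow, so
   (the [p u_{t_i t_j}] terms cancelling)
     D_i L_{1j} - D_j L_{1i} = Q_j pr(Q_i) p - pr(Q_i) h_j - Q_i pr(Q_j) p + pr(Q_j) h_i.
   The Euler-Lagrange equation of [L_{1i}], which vanishes on shell, gives
   [pr(Q_i) p = D_i p = sum_a (-D_1)^a f_a] with [f_a = (dp/du_{1^a}) Q_i - dh_i/du_{1^a}],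
   while [Q_i pr(Q_j) p - pr(Q_j) h_i = sum_a f_a D_1^a Q_j].  Each difference
   [(-1)^a Q_j D_1^a f_a - f_a D_1^a Q_j] is an x-derivative (integration by parts).
   Finally, evaluating the symmetry condition [pr(Q_i) L_{1j} = D_1 A + D_j B] on jets
   whose time derivatives vanish kills [u_{t_j}] and [D_j B], leaving
   [pr(Q_i) h_j = - D_1 (A restricted to the x-jet)]. *)

Definition list_sum (g : MI -> R) (l : list MI) : R :=
  fold_right (fun I acc => g I + acc) 0 l.

Lemma list_sum_perm g l1 l2 : Permutation l1 l2 -> list_sum g l1 = list_sum g l2.
Proof. induction 1; unfold list_sum in *; simpl in *; lra. Qed.

Lemma list_sum_filter_nonzero g l :
  list_sum g l = list_sum g (filter (fun I => if Req_dec_T (g I) 0 then false else true) l).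
Proof.
  induction l as [|a l IH]; simpl; auto.
  unfold list_sum in *; destruct (Req_dec_T (g a) 0) as [e|e]; simpl; rewrite IH; [rewrite e|]; lra.
Qed.

Lemma sumL_eq_on_support l1 l2 g :
  (forall I, g I <> 0 -> (In I l1 <-> In I l2)) -> sumL l1 g = sumL l2 g.
Proof.
  intros H. unfold sumL.
  change (list_sum g (nodup MI_eq_dec l1) = list_sum g (nodup MI_eq_dec l2)).
  rewrite (list_sum_filter_nonzero g (nodup _ l1)), (list_sum_filter_nonzero g (nodup _ l2)).
  apply list_sum_perm, NoDup_Permutation; try apply NoDup_filter, NoDup_nodup.
  intros x. rewrite !filter_In, !nodup_In.
  destruct (Req_dec_T (g x) 0) as [e|e]; [split; intros [_ X]; discriminate|].
  specialize (H x e). tauto.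
Qed.

Lemma sumL_ext l g g' : (forall I, In I l -> g I = g' I) -> sumL l g = sumL l g'.
Proof.
  intros H. unfold sumL.
  assert (H' : forall I, In I (nodup MI_eq_dec l) -> g I = g' I)
    by (intros I HI; apply H, (nodup_In MI_eq_dec); auto).
  induction (nodup MI_eq_dec l) as [|a r IH]; simpl; auto.
  rewrite H', IH; auto; [intros; apply H'|]; simpl; auto.
Qed.

Lemma sumL_plus l g1 g2 : sumL l (fun I => g1 I + g2 I) = sumL l g1 + sumL l g2.
Proof. unfold sumL. induction (nodup MI_eq_dec l); simpl; lra. Qed.

Lemma sumL_scal l c g : sumL l (fun I => c * g I) = c * sumL l g.
Proof. unfold sumL. induction (nodup MI_eq_dec l); simpl; lra. Qed.

Lemma sumL_minus l g1 g2 : sumL l (fun I => g1 I - g2 I) = sumL l g1 - sumL l g2.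
Proof. unfold sumL. induction (nodup MI_eq_dec l); simpl; lra. Qed.

Lemma sumL_opp l g : sumL l (fun I => - g I) = - sumL l g.
Proof. unfold sumL. induction (nodup MI_eq_dec l); simpl; lra. Qed.

Lemma sumL_zero l g : (forall I, In I l -> g I = 0) -> sumL l g = 0.
Proof.
  intros H. rewrite (sumL_ext l g (fun _ => 0)) by auto.
  unfold sumL. induction (nodup MI_eq_dec l); simpl; lra.
Qed.

Lemma sumL_single K g : sumL [K] g = g K.
Proof. unfold sumL. simpl. lra. Qed.

Lemma fold_seq_zero g s n : (forall a, In a (seq s n) -> g a = 0) ->
  fold_right (fun a acc => g a + acc) 0 (seq s n) = 0.
Proof.
  revert s; induction n; intros s H; simpl; auto.
  rewrite H, IHn by (simpl; auto; intros a Ha; apply H; right; auto). ring.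
Qed.

Lemma sumN_first M g : (forall a, (1 <= a)%nat -> g a = 0) -> sumN M g = g 0%nat.
Proof.
  intros H. unfold sumN. simpl. rewrite fold_seq_zero; [ring|].
  intros a Ha; apply in_seq in Ha; apply H; lia.
Qed.

Lemma sumN_first_two M g : (1 <= M)%nat -> (forall b, (2 <= b)%nat -> g b = 0) ->
  sumN M g = g 0%nat + g 1%nat.
Proof.
  intros HM H. unfold sumN. destruct M; [lia|]. simpl. rewrite fold_seq_zero; [ring|].
  intros a Ha; apply in_seq in Ha; apply H; lia.
Qed.

Lemma sumN_ext M g g' : (forall a, (a <= M)%nat -> g a = g' a) -> sumN M g = sumN M g'.
Proof.
  intros H. unfold sumN.
  assert (H' : forall a, In a (seq 0 (S M)) -> g a = g' a)
    by (intros a Ha; apply in_seq in Ha; apply H; lia).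
  induction (seq 0 (S M)); simpl; auto.
  rewrite H', IHl; auto; [intros; apply H'|]; simpl; auto.
Qed.

Lemma sumN_plus M g g' : sumN M (fun a => g a + g' a) = sumN M g + sumN M g'.
Proof. unfold sumN. induction (seq 0 (S M)); simpl; lra. Qed.

Lemma sumN_minus M g g' : sumN M (fun a => g a - g' a) = sumN M g - sumN M g'.
Proof. unfold sumN. induction (seq 0 (S M)); simpl; lra. Qed.

Lemma sumN_scal M c g : sumN M (fun a => c * g a) = c * sumN M g.
Proof. unfold sumN. induction (seq 0 (S M)); simpl; lra. Qed.

Definition depends_on (S : list MI) (f : J -> R) : Prop :=
  forall v w, (forall I, In I S -> v I = w I) -> f v = f w.

Lemma upd_same v I : upd v I (v I) = v.
Proof.
  apply functional_extensionality; intro K; unfold upd.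
  destruct MI_eq_dec; subst; auto.
Qed.

Lemma upd_neq v I s K : K <> I -> upd v I s K = v K.
Proof. unfold upd; destruct MI_eq_dec; congruence. Qed.

Lemma depends_on_incl S S' f : depends_on S f -> incl S S' -> depends_on S' f.
Proof. intros H Hi v w Hvw. apply H. intros; apply Hvw, Hi; auto. Qed.

Lemma pd_not_in S f I v : depends_on S f -> ~ In I S -> pd I f v = 0.
Proof.
  intros H HI. unfold pd. rewrite (Derive_ext _ (fun _ => f v)); [apply Derive_const|].
  intros t. apply H. intros K HK. apply upd_neq. intro; subst; auto.
Qed.

Lemma depends_on_pd S f I : depends_on S f -> depends_on S (pd I f).
Proof.
  intros H v w Hvw. destruct (in_dec MI_eq_dec I S) as [HI|HI].
  - unfold pd. rewrite (Hvw I HI). apply Derive_ext. intros t. apply H.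
    intros K HK. unfold upd. destruct MI_eq_dec; auto.
  - rewrite !(pd_not_in S) by auto. auto.
Qed.

Definition Dtot (S : list MI) (f : J -> R) (k : nat) : J -> R :=
  fun v => sumL S (fun I => v (incr k I) * pd I f v).

Lemma Dtot_indep S1 S2 f k v :
  depends_on S1 f -> depends_on S2 f -> Dtot S1 f k v = Dtot S2 f k v.
Proof.
  intros H1 H2. unfold Dtot. apply sumL_eq_on_support. intros I HI.
  destruct (in_dec MI_eq_dec I S1) as [h1|h1]; destruct (in_dec MI_eq_dec I S2) as [h2|h2];
    try tauto; exfalso; apply HI; [rewrite (pd_not_in S2) | rewrite (pd_not_in S1)]; auto; lra.
Qed.

Lemma Dtot_app_l S1 S2 f k v : depends_on S1 f -> Dtot (S1 ++ S2) f k v = Dtot S1 f k v.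
Proof.
  intros H. apply Dtot_indep; auto.
  apply (depends_on_incl S1); auto. intros I HI; apply in_or_app; auto.
Qed.

Lemma Dtot_app_r S1 S2 f k v : depends_on S2 f -> Dtot (S1 ++ S2) f k v = Dtot S2 f k v.
Proof.
  intros H. apply Dtot_indep; auto.
  apply (depends_on_incl S2); auto. intros I HI; apply in_or_app; auto.
Qed.

Lemma depends_on_Dtot S f k : depends_on S f -> depends_on (S ++ map (incr k) S) (Dtot S f k).
Proof.
  intros H v w Hvw. unfold Dtot. apply sumL_ext. intros I HI.
  rewrite (Hvw (incr k I)) by (apply in_or_app; right; apply in_map; auto).
  rewrite (depends_on_pd S f I H v w); auto. intros; apply Hvw, in_or_app; auto.
Qed.

(** * Restriction to the x-jet *)

Definition xonlyb (N : nat) (K : MI) : bool :=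
  Nat.eqb (length K) N && forallb (fun x => Nat.eqb x 0) (tl K).

Definition xproj (N : nat) (v : J) : J := fun K => if xonlyb N K then v K else 0.

Lemma xproj_upd_x N v I s : xonlyb N I = true -> xproj N (upd v I s) = upd (xproj N v) I s.
Proof.
  intros H. apply functional_extensionality; intro K. unfold xproj, upd.
  destruct MI_eq_dec; subst; auto. rewrite H; auto.
Qed.

Lemma xproj_upd_nx N v I s : xonlyb N I = false -> xproj N (upd v I s) = xproj N v.
Proof.
  intros H. apply functional_extensionality; intro K. unfold xproj, upd.
  destruct MI_eq_dec; subst; auto. rewrite H; auto.
Qed.

(* A class on which [pd] obeys the sum and product rules; it contains the
   [is_dfun]s and, unlike [smooth_on (supp F)], is stable under [pd] and [xproj]. *)
Inductive regular (N : nat) : (J -> R) -> Prop :=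
| regular_smooth_on S f : smooth_on S f -> regular N f
| regular_const c : regular N (fun _ => c)
| regular_coord K : regular N (fun v => v K)
| regular_add f g : regular N f -> regular N g -> regular N (fun v => f v + g v)
| regular_sub f g : regular N f -> regular N g -> regular N (fun v => f v - g v)
| regular_mul f g : regular N f -> regular N g -> regular N (fun v => f v * g v)
| regular_xproj f : regular N f -> regular N (fun v => f (xproj N v)).

Lemma regular_ex_derive N f : regular N f ->
  forall I v, ex_derive (fun s => f (upd v I s)) (v I).
Proof.
  induction 1; intros I v.
  - apply (proj1 (H nil)).
  - apply ex_derive_const.
  - unfold upd. destruct (MI_eq_dec K I); [apply ex_derive_id|apply ex_derive_const].
  - apply (ex_derive_plus (fun s => f (upd v I s)) (fun s => g (upd v I s))); auto.
  - apply (ex_derive_minus (fun s => f (upd v I s)) (fun s => g (upd v I s))); auto.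
  - apply (ex_derive_mult (fun s => f (upd v I s)) (fun s => g (upd v I s))); auto.
  - case_eq (xonlyb N I); intro E.
    + apply (ex_derive_ext (fun s => f (upd (xproj N v) I s))).
      * intros t; rewrite xproj_upd_x; auto.
      * replace (v I) with (xproj N v I) by (unfold xproj; rewrite E; auto). apply IHregular.
    + apply (ex_derive_ext (fun s => f (xproj N v))).
      * intros t; rewrite xproj_upd_nx; auto.
      * apply ex_derive_const.
Qed.

Lemma pd_add N f g I : regular N f -> regular N g ->
  pd I (fun v => f v + g v) = fun v => pd I f v + pd I g v.
Proof.
  intros Hf Hg. apply functional_extensionality; intro v. unfold pd.
  apply (Derive_plus (fun s => f (upd v I s)) (fun s => g (upd v I s)));
    apply (regular_ex_derive N); auto.
Qed.

Lemma pd_sub N f g I : regular N f -> regular N g ->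
  pd I (fun v => f v - g v) = fun v => pd I f v - pd I g v.
Proof.
  intros Hf Hg. apply functional_extensionality; intro v. unfold pd.
  apply (Derive_minus (fun s => f (upd v I s)) (fun s => g (upd v I s)));
    apply (regular_ex_derive N); auto.
Qed.

Lemma pd_mul N f g I : regular N f -> regular N g ->
  pd I (fun v => f v * g v) = fun v => pd I f v * g v + f v * pd I g v.
Proof.
  intros Hf Hg. apply functional_extensionality; intro v. unfold pd.
  rewrite (Derive_mult (fun s => f (upd v I s)) (fun s => g (upd v I s)));
    try (apply (regular_ex_derive N); auto).
  rewrite !upd_same. auto.
Qed.

Lemma pd_const I c : pd I (fun _ => c) = fun _ => 0.
Proof. apply functional_extensionality; intro v. unfold pd. apply Derive_const. Qed.

Lemma pd_coord I K : pd I (fun v => v K) = fun _ => if MI_eq_dec K I then 1 else 0.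
Proof.
  apply functional_extensionality; intro v. unfold pd, upd.
  destruct (MI_eq_dec K I); [apply Derive_id|apply Derive_const].
Qed.

Lemma pd_xproj N f I : pd I (fun v => f (xproj N v)) =
  fun v => if xonlyb N I then pd I f (xproj N v) else 0.
Proof.
  apply functional_extensionality; intro v. unfold pd. case_eq (xonlyb N I); intro E.
  - replace (xproj N v I) with (v I) by (unfold xproj; rewrite E; auto).
    apply Derive_ext. intros t; rewrite xproj_upd_x; auto.
  - rewrite (Derive_ext _ (fun _ => f (xproj N v))); [apply Derive_const|].
    intros t; rewrite xproj_upd_nx; auto.
Qed.

Lemma iter_pd_app l1 l2 f : iter_pd (l1 ++ l2) f = iter_pd l1 (iter_pd l2 f).
Proof. induction l1; simpl; auto. rewrite IHl1; auto. Qed.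

Lemma regular_pd N f I : regular N f -> regular N (pd I f).
Proof.
  induction 1.
  - apply (regular_smooth_on N S). intros l. change (pd I f) with (iter_pd [I] f).
    rewrite <- (iter_pd_app l [I]). apply H.
  - rewrite pd_const. apply regular_const.
  - rewrite pd_coord. apply regular_const.
  - rewrite (pd_add N f g); auto. apply regular_add; auto.
  - rewrite (pd_sub N f g); auto. apply regular_sub; auto.
  - rewrite (pd_mul N f g); auto. apply regular_add; apply regular_mul; auto.
  - rewrite pd_xproj. destruct (xonlyb N I); [apply (regular_xproj N (pd I f))|apply regular_const]; auto.
Qed.

Lemma regular_iter_pd N f l : regular N f -> regular N (iter_pd l f).
Proof. intros H; induction l; simpl; auto. apply regular_pd; auto. Qed.

Lemma regular_sumL N S (g : MI -> J -> R) : (forall I, regular N (g I)) ->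
  regular N (fun v => sumL S (fun I => g I v)).
Proof.
  intros H. unfold sumL. induction (nodup MI_eq_dec S) as [|a l IH]; simpl.
  - apply regular_const.
  - apply (regular_add N (fun v => g a v)); auto.
Qed.

Lemma cont_on_add S1 S2 f g :
  cont_on S1 f -> cont_on S2 g -> cont_on (S1 ++ S2) (fun v => f v + g v).
Proof.
  intros Hf Hg v eps he.
  destruct (Hf v (eps/2)) as [d1 [h1 H1]]; try lra.
  destruct (Hg v (eps/2)) as [d2 [h2 H2]]; try lra.
  exists (Rmin d1 d2); split; [apply Rmin_pos; auto|]. intros w Hw.
  assert (A1 := H1 w (fun I HI => Rlt_le_trans _ _ _ (Hw I (in_or_app _ _ _ (or_introl HI))) (Rmin_l _ _))).
  assert (A2 := H2 w (fun I HI => Rlt_le_trans _ _ _ (Hw I (in_or_app _ _ _ (or_intror HI))) (Rmin_r _ _))).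
  replace (f w + g w - (f v + g v)) with ((f w - f v) + (g w - g v)) by ring.
  eapply Rle_lt_trans; [apply Rabs_triang|]. lra.
Qed.

Lemma cont_on_opp S f : cont_on S f -> cont_on S (fun v => - f v).
Proof.
  intros Hf v eps he. destruct (Hf v eps he) as [d [hd Hd]]. exists d; split; auto.
  intros w Hw. replace (- f w - - f v) with (- (f w - f v)) by ring. rewrite Rabs_Ropp; auto.
Qed.

Lemma cont_on_mul S1 S2 f g :
  cont_on S1 f -> cont_on S2 g -> cont_on (S1 ++ S2) (fun v => f v * g v).
Proof.
  intros Hf Hg v eps he.
  set (K := Rabs (f v) + Rabs (g v) + 1).
  assert (hK : 0 < K) by (unfold K; pose proof (Rabs_pos (f v)); pose proof (Rabs_pos (g v)); lra).
  set (e' := Rmin 1 (eps / (2 * K))).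
  assert (he' : 0 < e') by (apply Rmin_pos; [lra| apply Rdiv_lt_0_compat; lra]).
  destruct (Hf v e') as [d1 [h1 H1]]; auto.
  destruct (Hg v e') as [d2 [h2 H2]]; auto.
  exists (Rmin d1 d2); split; [apply Rmin_pos; auto|]. intros w Hw.
  assert (A1 := H1 w (fun I HI => Rlt_le_trans _ _ _ (Hw I (in_or_app _ _ _ (or_introl HI))) (Rmin_l _ _))).
  assert (A2 := H2 w (fun I HI => Rlt_le_trans _ _ _ (Hw I (in_or_app _ _ _ (or_intror HI))) (Rmin_r _ _))).
  replace (f w * g w - f v * g v) with ((f w - f v) * g w + f v * (g w - g v)) by ring.
  eapply Rle_lt_trans; [apply Rabs_triang|]. rewrite !Rabs_mult.
  assert (e'1 : e' <= 1) by apply Rmin_l.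
  assert (e'2 : e' <= eps / (2 * K)) by apply Rmin_r.
  assert (Hgw : Rabs (g w) <= Rabs (g v) + 1).
  { replace (g w) with (g v + (g w - g v)) by ring. eapply Rle_trans; [apply Rabs_triang|]. lra. }
  assert (B1 : Rabs (f w - f v) * Rabs (g w) <= e' * (Rabs (g v) + 1))
    by (apply Rmult_le_compat; try apply Rabs_pos; lra).
  assert (B2 : Rabs (f v) * Rabs (g w - g v) <= Rabs (f v) * e')
    by (apply Rmult_le_compat_l; [apply Rabs_pos| lra]).
  assert (B3 : e' * K <= eps / 2).
  { replace (eps/2) with (eps / (2*K) * K) by (field; lra). apply Rmult_le_compat_r; lra. }
  unfold K in B3. lra.
Qed.

Lemma regular_cont N f : regular N f -> exists S, cont_on S f.
Proof.
  induction 1.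
  - exists S. apply (H nil).
  - exists nil. intros v eps he. exists 1; split; [lra|].
    intros. rewrite Rminus_diag, Rabs_R0; auto.
  - exists [K]. intros v eps he. exists eps; split; auto. intros w Hw. apply Hw; left; auto.
  - destruct IHregular1 as [S1 H1], IHregular2 as [S2 H2].
    exists (S1 ++ S2). apply cont_on_add; auto.
  - destruct IHregular1 as [S1 H1], IHregular2 as [S2 H2]. exists (S1 ++ S2).
    apply (cont_on_add S1 S2 f (fun v => - g v)); auto. apply cont_on_opp; auto.
  - destruct IHregular1 as [S1 H1], IHregular2 as [S2 H2].
    exists (S1 ++ S2). apply cont_on_mul; auto.
  - destruct IHregular as [S HS]. exists S. intros v eps he.
    destruct (HS (xproj N v) eps he) as [d [hd Hd]].
    exists d; split; auto. intros w Hw. apply Hd. intros I HI. unfold xproj.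
    destruct (xonlyb N I); auto. rewrite Rminus_diag, Rabs_R0; auto.
Qed.

Lemma cont_on_depends_on S S' f : cont_on S' f -> depends_on S f -> cont_on S f.
Proof.
  intros H Hd v eps he. destruct (H v eps he) as [d [hd Hd']]. exists d; split; auto.
  intros w Hw. set (w' := fun K => if in_dec MI_eq_dec K S then w K else v K).
  rewrite (Hd w w').
  - apply Hd'. intros I _. unfold w'. destruct in_dec; auto.
    rewrite Rminus_diag, Rabs_R0; auto.
  - intros I HI. unfold w'. destruct in_dec; tauto.
Qed.

Lemma regular_smooth N S f : regular N f -> depends_on S f -> smooth_on S f.
Proof.
  intros Hg Hd l.
  assert (D : depends_on S (iter_pd l f))
    by (induction l; simpl; [auto| apply depends_on_pd; auto]).
  split; [apply (regular_ex_derive N), regular_iter_pd; auto|].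
  destruct (regular_cont N _ (regular_iter_pd N f l Hg)) as [S' HS'].
  apply (cont_on_depends_on S S'); auto.
Qed.

Definition regular_df (N : nat) (F : DF) : Prop :=
  depends_on (supp F) (fn F) /\ regular N (fn F).

Definition constDF (c : R) : DF := mkDF nil (fun _ => c).

Lemma is_dfun_regular_df N F : is_dfun N F -> regular_df N F.
Proof. intros [_ [H1 H2]]. split; [exact H1|]. apply (regular_smooth_on N (supp F)); auto. Qed.

Lemma regular_df_Dt N k F : regular_df N F -> regular_df N (Dt k F).
Proof.
  intros [Hd Hg]. split; [apply depends_on_Dtot; auto|].
  apply (regular_sumL N _ (fun I v => v (incr k I) * pd I (fn F) v)). intros I.
  apply (regular_mul N (fun v => v (incr k I))); [apply regular_coord|apply regular_pd; auto].
Qed.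

Lemma regular_df_iter N k n F : regular_df N F -> regular_df N (Nat.iter n (Dt k) F).
Proof. intros H; induction n; simpl; auto. apply regular_df_Dt; auto. Qed.

Lemma regular_df_add N F G : regular_df N F -> regular_df N G -> regular_df N (addDF F G).
Proof.
  intros [HF GF] [HG GG]. split; [|apply regular_add; auto].
  intros v w H. simpl. rewrite (HF v w), (HG v w); auto; intros; apply H, in_or_app; auto.
Qed.

Lemma regular_df_sub N F G : regular_df N F -> regular_df N G -> regular_df N (subDF F G).
Proof.
  intros [HF GF] [HG GG]. split; [|apply regular_sub; auto].
  intros v w H. simpl. rewrite (HF v w), (HG v w); auto; intros; apply H, in_or_app; auto.
Qed.

Lemma regular_df_mul N F G : regular_df N F -> regular_df N G -> regular_df N (mulDF F G).
Proof.
  intros [HF GF] [HG GG]. split; [|apply regular_mul; auto].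
  intros v w H. simpl. rewrite (HF v w), (HG v w); auto; intros; apply H, in_or_app; auto.
Qed.

Lemma regular_df_coord N K : regular_df N (coordF K).
Proof. split; [intros v w H; apply H; left; auto|apply regular_coord]. Qed.

Lemma regular_df_const N c : regular_df N (constDF c).
Proof. split; [intros v w H; auto|exact (regular_const N c)]. Qed.

Lemma regular_df_pdF N I F : regular_df N F -> regular_df N (pdF I F).
Proof. intros [HF GF]. split; [apply depends_on_pd|apply regular_pd]; auto. Qed.

Lemma Dt_ext N k F G : regular_df N F -> regular_df N G -> fn F = fn G ->
  fn (Dt k F) = fn (Dt k G).
Proof.
  intros [HF _] [HG _] E. apply functional_extensionality; intro v.
  change (Dtot (supp F) (fn F) k v = Dtot (supp G) (fn G) k v). rewrite E in *.
  apply Dtot_indep; auto.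
Qed.

Lemma iter_Dt_ext N k n F G : regular_df N F -> regular_df N G -> fn F = fn G ->
  fn (Nat.iter n (Dt k) F) = fn (Nat.iter n (Dt k) G).
Proof.
  intros HF HG E. induction n; simpl; auto.
  apply (Dt_ext N); auto; apply regular_df_iter; auto.
Qed.

Lemma Dt_add N k F G : regular_df N F -> regular_df N G ->
  fn (Dt k (addDF F G)) = fun v => fn (Dt k F) v + fn (Dt k G) v.
Proof.
  intros [HF GF] [HG GG]. apply functional_extensionality; intro v.
  change (Dtot (supp F ++ supp G) (fun v => fn F v + fn G v) k v =
          Dtot (supp F) (fn F) k v + Dtot (supp G) (fn G) k v).
  rewrite <- (Dtot_app_l (supp F) (supp G)), <- (Dtot_app_r (supp F) (supp G)) by auto.
  unfold Dtot. rewrite <- sumL_plus. apply sumL_ext. intros I _.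
  rewrite (pd_add N); auto. ring.
Qed.

Lemma Dt_sub N k F G : regular_df N F -> regular_df N G ->
  fn (Dt k (subDF F G)) = fun v => fn (Dt k F) v - fn (Dt k G) v.
Proof.
  intros [HF GF] [HG GG]. apply functional_extensionality; intro v.
  change (Dtot (supp F ++ supp G) (fun v => fn F v - fn G v) k v =
          Dtot (supp F) (fn F) k v - Dtot (supp G) (fn G) k v).
  rewrite <- (Dtot_app_l (supp F) (supp G)), <- (Dtot_app_r (supp F) (supp G)) by auto.
  unfold Dtot. rewrite <- sumL_minus. apply sumL_ext. intros I _.
  rewrite (pd_sub N); auto. ring.
Qed.

Lemma Dt_mul N k F G : regular_df N F -> regular_df N G ->
  fn (Dt k (mulDF F G)) = fun v => fn (Dt k F) v * fn G v + fn F v * fn (Dt k G) v.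
Proof.
  intros [HF GF] [HG GG]. apply functional_extensionality; intro v.
  change (Dtot (supp F ++ supp G) (fun v => fn F v * fn G v) k v =
          Dtot (supp F) (fn F) k v * fn G v + fn F v * Dtot (supp G) (fn G) k v).
  rewrite <- (Dtot_app_l (supp F) (supp G)), <- (Dtot_app_r (supp F) (supp G)) by auto.
  unfold Dtot. rewrite Rmult_comm, <- !sumL_scal, <- sumL_plus. apply sumL_ext. intros I _.
  rewrite (pd_mul N); auto. ring.
Qed.

Lemma Dt_coord k K : fn (Dt k (coordF K)) = fun v => v (incr k K).
Proof.
  apply functional_extensionality; intro v. simpl. rewrite sumL_single.
  change (fun v0 : J => v0 K) with (fn (coordF K)). simpl. rewrite pd_coord.
  destruct MI_eq_dec; [ring|congruence].
Qed.

Lemma Dt_const k c : fn (Dt k (constDF c)) = fun _ => 0.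
Proof. reflexivity. Qed.

Lemma iter_Dt_zero N k n F : regular_df N F -> fn F = (fun _ => 0) ->
  fn (Nat.iter n (Dt k) F) = fun _ => 0.
Proof.
  intros H E. induction n; auto. rewrite !Nat.iter_succ.
  rewrite (Dt_ext N k _ (constDF 0)); auto; [apply regular_df_iter; auto|apply regular_df_const].
Qed.

Lemma iter_Dt_add N k n F G : regular_df N F -> regular_df N G ->
  fn (Nat.iter n (Dt k) (addDF F G)) =
  fun v => fn (Nat.iter n (Dt k) F) v + fn (Nat.iter n (Dt k) G) v.
Proof.
  intros HF HG. induction n; auto. rewrite !Nat.iter_succ.
  rewrite (Dt_ext N k _ (addDF (Nat.iter n (Dt k) F) (Nat.iter n (Dt k) G))); auto.
  - apply (Dt_add N); apply regular_df_iter; auto.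
  - apply regular_df_iter, regular_df_add; auto.
  - apply regular_df_add; apply regular_df_iter; auto.
Qed.

Lemma iter_Dt_sub N k n F G : regular_df N F -> regular_df N G ->
  fn (Nat.iter n (Dt k) (subDF F G)) =
  fun v => fn (Nat.iter n (Dt k) F) v - fn (Nat.iter n (Dt k) G) v.
Proof.
  intros HF HG. induction n; auto. rewrite !Nat.iter_succ.
  rewrite (Dt_ext N k _ (subDF (Nat.iter n (Dt k) F) (Nat.iter n (Dt k) G))); auto.
  - apply (Dt_sub N); apply regular_df_iter; auto.
  - apply regular_df_iter, regular_df_sub; auto.
  - apply regular_df_sub; apply regular_df_iter; auto.
Qed.

Lemma iter_Dt_coord k n K :
  fn (Nat.iter n (Dt k) (coordF K)) = fn (coordF (Nat.iter n (incr k) K)).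
Proof.
  induction n; auto. rewrite !Nat.iter_succ.
  rewrite (Dt_ext 0 k _ (coordF (Nat.iter n (incr k) K))); auto.
  - apply Dt_coord.
  - apply regular_df_iter, regular_df_coord.
  - apply regular_df_coord.
Qed.

Definition xMI (N a : nat) : MI := Nat.iter a (incr 0) (zeroMI N).

Lemma length_incr k I : length (incr k I) = length I.
Proof. revert k; induction I; intros [|k]; simpl; auto. Qed.

Lemma length_iter_incr k n I : length (Nat.iter n (incr k) I) = length I.
Proof. induction n; simpl; auto. rewrite length_incr; auto. Qed.

Lemma length_zeroMI N : length (zeroMI N) = N.
Proof. apply repeat_length. Qed.

Lemma nth_zeroMI N m : nth m (zeroMI N) 0%nat = 0%nat.
Proof. unfold zeroMI. revert m; induction N; intros [|m]; simpl; auto. Qed.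

Lemma nth_incr k I m : (k < length I)%nat ->
  nth m (incr k I) 0%nat = if Nat.eqb m k then S (nth m I 0%nat) else nth m I 0%nat.
Proof.
  revert k m; induction I as [|a I IH]; intros k m H; simpl in H; [lia|].
  destruct k, m; simpl; auto. apply IH; lia.
Qed.

Lemma nth_iter_incr k n I m : (k < length I)%nat ->
  nth m (Nat.iter n (incr k) I) 0%nat =
  if Nat.eqb m k then (n + nth m I 0)%nat else nth m I 0%nat.
Proof.
  intros H. induction n; simpl; [destruct (Nat.eqb m k); auto|].
  rewrite nth_incr by (rewrite length_iter_incr; auto). rewrite IHn. destruct (Nat.eqb m k); auto.
Qed.

Lemma incr_comm a b I : incr a (incr b I) = incr b (incr a I).
Proof. revert a b; induction I as [|x I IH]; intros [|a] [|b]; simpl; auto. rewrite IH; auto. Qed.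

Lemma iter_incr_comm a b n I : Nat.iter n (incr a) (incr b I) = incr b (Nat.iter n (incr a) I).
Proof. induction n; simpl; auto. rewrite IHn, incr_comm; auto. Qed.

Lemma ordMI_incr k I : (k < length I)%nat -> ordMI (incr k I) = S (ordMI I).
Proof.
  revert k; induction I as [|a I IH]; intros k H; simpl in H; [lia|].
  destruct k; simpl; auto. rewrite IH by lia. lia.
Qed.

Lemma ordMI_zeroMI N : ordMI (zeroMI N) = 0%nat.
Proof. unfold zeroMI, ordMI. induction N; simpl; auto. Qed.

Lemma ordMI_xMI N a : (0 < N)%nat -> ordMI (xMI N a) = a.
Proof.
  intros H. unfold xMI. induction a; [apply ordMI_zeroMI|].
  rewrite Nat.iter_succ, ordMI_incr, IHa; auto. rewrite length_iter_incr, length_zeroMI; auto.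
Qed.

Lemma ordMI_eMI N i : (i < N)%nat -> ordMI (eMI N i) = 1%nat.
Proof.
  intros H. unfold eMI. rewrite ordMI_incr, ordMI_zeroMI; auto. rewrite length_zeroMI; auto.
Qed.

Lemma maxord_ge F I : In I (supp F) -> (ordMI I <= maxord F)%nat.
Proof.
  unfold maxord. induction (supp F); simpl; intros H; [tauto|].
  destruct H as [H|H]; [subst; lia|]. specialize (IHl H). lia.
Qed.

Lemma xonly_xonlyb N I : xonly N I <-> xonlyb N I = true.
Proof.
  unfold xonly, xonlyb. rewrite Bool.andb_true_iff, Nat.eqb_eq, forallb_forall.
  split; intros [H1 H2]; split; auto.
  - intros x Hx. apply Nat.eqb_eq. destruct I as [|a I]; simpl in Hx; [tauto|].
    destruct (In_nth _ _ 0%nat Hx) as [m [_ Hm]]. rewrite <- Hm. apply (H2 (S m)). lia.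
  - intros k Hk. destruct k; [lia|]. destruct I as [|a I]; simpl; [destruct k; auto|].
    destruct (Nat.lt_ge_cases k (length I)).
    + apply Nat.eqb_eq, H2. apply nth_In; auto.
    + apply nth_overflow; auto.
Qed.

Lemma xonly_xMI N a : xonly N (xMI N a).
Proof.
  split; [unfold xMI; rewrite length_iter_incr, length_zeroMI; auto|].
  intros k Hk. unfold xMI. destruct N.
  - assert (E : Nat.iter a (incr 0) (zeroMI 0) = []).
    { induction a; [reflexivity|]. rewrite Nat.iter_succ, IHa. reflexivity. }
    rewrite E. destruct k; auto.
  - rewrite nth_iter_incr by (rewrite length_zeroMI; lia). destruct k; [lia|]. apply nth_zeroMI.
Qed.

Lemma xonly_eq_xMI N I : (0 < N)%nat -> xonly N I -> I = xMI N (ordMI I).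
Proof.
  intros HN [HL HI]. apply nth_ext with 0%nat 0%nat.
  - unfold xMI; rewrite length_iter_incr, length_zeroMI; auto.
  - intros m _. unfold xMI. rewrite nth_iter_incr by (rewrite length_zeroMI; lia).
    rewrite nth_zeroMI. destruct m; [|simpl; apply HI; lia].
    destruct I as [|a I]; simpl in HL; [lia|]. simpl.
    assert (HI' : forall m, nth m I 0%nat = 0%nat) by (intros m; apply (HI (S m)); lia).
    assert (Z : fold_right Nat.add 0%nat I = 0%nat).
    { clear HL HI. induction I as [|b I IHI]; simpl; auto.
      pose proof (HI' 0%nat) as H0; simpl in H0; subst.
      rewrite IHI; auto. intros m; apply (HI' (S m)). }
    unfold ordMI; simpl; lia.
Qed.

Lemma xMI_inj N a b : (0 < N)%nat -> xMI N a = xMI N b -> a = b.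
Proof. intros H E. rewrite <- (ordMI_xMI N a), <- (ordMI_xMI N b), E; auto. Qed.

Lemma xonly_incr0 N I : xonly N I -> xonly N (incr 0 I).
Proof.
  intros [HL HI]. split; [rewrite length_incr; auto|]. intros k Hk.
  destruct I as [|a I]; [destruct k; reflexivity|]. destruct k; [lia|]. exact (HI (S k) Hk).
Qed.

Lemma xonly_incr0_inv N I : xonly N (incr 0 I) -> xonly N I.
Proof.
  intros [HL HI]. rewrite length_incr in HL. split; auto. intros k Hk.
  specialize (HI k Hk). destruct I as [|a I]; simpl in *; auto. destruct k; [lia|]. auto.
Qed.

Lemma not_xonly_incr N j I : (0 < j < N)%nat -> length I = N -> ~ xonly N (incr j I).
Proof.
  intros Hj HL [_ H]. specialize (H j ltac:(lia)). rewrite nth_incr in H by lia.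
  rewrite Nat.eqb_refl in H. discriminate.
Qed.

Lemma not_xonly_eMI N j : (0 < j < N)%nat -> ~ xonly N (eMI N j).
Proof. intros H. apply not_xonly_incr; auto. apply length_zeroMI. Qed.

Lemma nth_iter_incr_0_i N i a b m : (0 < i < N)%nat ->
  nth m (Nat.iter a (incr 0) (Nat.iter b (incr i) (zeroMI N))) 0%nat =
  if Nat.eqb m 0 then a else if Nat.eqb m i then b else 0%nat.
Proof.
  intros H. rewrite nth_iter_incr by (rewrite length_iter_incr, length_zeroMI; lia).
  rewrite nth_iter_incr by (rewrite length_zeroMI; lia). rewrite nth_zeroMI.
  destruct (Nat.eqb_spec m 0); destruct (Nat.eqb_spec m i); subst; lia.
Qed.

Fixpoint shiftMI (k : nat) (K : MI) (I : MI) : MI :=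
  match K with nil => I | a :: l => shiftMI (S k) l (Nat.iter a (incr k) I) end.

Lemma shiftMI_incr k K i I : shiftMI k K (incr i I) = incr i (shiftMI k K I).
Proof. revert k I; induction K; intros k I; simpl; auto. rewrite iter_incr_comm; auto. Qed.

Lemma iter_incr_app P x l a :
  Nat.iter a (incr (length P)) (P ++ x :: l) = P ++ (a + x)%nat :: l.
Proof.
  induction a; [reflexivity|]. rewrite Nat.iter_succ, IHa.
  clear. induction P; simpl; auto. rewrite IHP; auto.
Qed.

Lemma shiftMI_app K P : shiftMI (length P) K (P ++ repeat 0%nat (length K)) = P ++ K.
Proof.
  revert P; induction K as [|a K IH]; intros P; simpl; [rewrite app_nil_r; auto|].
  rewrite iter_incr_app, Nat.add_0_r.
  replace (S (length P)) with (length (P ++ [a])) by (rewrite length_app; simpl; lia).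
  replace (P ++ a :: repeat 0%nat (length K)) with ((P ++ [a]) ++ repeat 0%nat (length K))
    by (rewrite <- app_assoc; auto).
  rewrite IH, <- app_assoc; auto.
Qed.

Lemma shiftMI_zeroMI N K : length K = N -> shiftMI 0 K (zeroMI N) = K.
Proof. intros H. unfold zeroMI. subst. apply (shiftMI_app K nil). Qed.

Lemma Dmulti_aux_zeros k n F : Dmulti_aux k (repeat 0%nat n) F = F.
Proof. revert k; induction n; intros k; simpl; auto. Qed.

Lemma Dmulti_zeroMI N F : Dmulti (zeroMI N) F = F.
Proof. apply Dmulti_aux_zeros. Qed.

Lemma Dmulti_xMI N a F : (0 < N)%nat -> Dmulti (xMI N a) F = Nat.iter a (Dt 0) F.
Proof.
  intros H. destruct N; [lia|]. unfold xMI, zeroMI. simpl repeat.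
  replace (Nat.iter a (incr 0) (0%nat :: repeat 0%nat N)) with (a :: repeat 0%nat N).
  - unfold Dmulti. simpl. apply Dmulti_aux_zeros.
  - induction a; [reflexivity|]. rewrite Nat.iter_succ, <- IHa. reflexivity.
Qed.

Lemma Dmulti_aux_incr n k j F : (j < n)%nat ->
  Dmulti_aux k (incr j (repeat 0%nat n)) F = Dt (k + j) F.
Proof.
  revert k j; induction n; intros k j H; [lia|]. simpl repeat. destruct j.
  - simpl. rewrite Dmulti_aux_zeros, Nat.add_0_r; auto.
  - simpl. rewrite IHn by lia. f_equal; lia.
Qed.

Lemma Dmulti_eMI N j F : (j < N)%nat -> Dmulti (eMI N j) F = Dt j F.
Proof. intros H. apply Dmulti_aux_incr; auto. Qed.

Lemma Dmulti_aux_ext N k K F G : regular_df N F -> regular_df N G -> fn F = fn G ->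
  fn (Dmulti_aux k K F) = fn (Dmulti_aux k K G).
Proof.
  revert k F G; induction K; intros k F G HF HG E; simpl; auto.
  apply IHK; try apply regular_df_iter; auto. apply (iter_Dt_ext N); auto.
Qed.

Lemma Dmulti_aux_sub N k K F G : regular_df N F -> regular_df N G ->
  fn (Dmulti_aux k K (subDF F G)) = fun v => fn (Dmulti_aux k K F) v - fn (Dmulti_aux k K G) v.
Proof.
  revert k F G; induction K; intros k F G HF HG; simpl; auto.
  rewrite (Dmulti_aux_ext N (S k) K _ (subDF (Nat.iter a (Dt k) F) (Nat.iter a (Dt k) G))).
  - apply IHK; apply regular_df_iter; auto.
  - apply regular_df_iter, regular_df_sub; auto.
  - apply regular_df_sub; apply regular_df_iter; auto.
  - apply (iter_Dt_sub N); auto.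
Qed.

Lemma Dmulti_aux_coord k K I : fn (Dmulti_aux k K (coordF I)) = fn (coordF (shiftMI k K I)).
Proof.
  revert k I; induction K; intros k I; simpl; auto.
  rewrite (Dmulti_aux_ext 0 (S k) K _ (coordF (Nat.iter a (incr k) I))).
  - apply IHK.
  - apply regular_df_iter, regular_df_coord.
  - apply regular_df_coord.
  - apply iter_Dt_coord.
Qed.

Definition xonly_df (N : nat) (F : DF) : Prop := List.Forall (xonly N) (supp F).

Lemma xonly_df_length N F : xonly_df N F -> List.Forall (fun I => length I = N) (supp F).
Proof. intros H. eapply List.Forall_impl; [|exact H]. intros I [HI _]; auto. Qed.

Lemma regular_df_is_dfun N F : regular_df N F -> xonly_df N F -> is_dfun N F.
Proof.
  intros [Hd Hg] X. split; [apply xonly_df_length; auto|].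
  split; [exact Hd|apply (regular_smooth N); auto].
Qed.

Lemma depends_on_xproj N S f v : depends_on S f -> List.Forall (xonly N) S -> f (xproj N v) = f v.
Proof.
  intros H HS. apply H. intros I HI. rewrite Forall_forall in HS.
  unfold xproj. rewrite (proj1 (xonly_xonlyb N I)); auto.
Qed.

Lemma xonly_df_Dt0 N F : xonly_df N F -> xonly_df N (Dt 0 F).
Proof.
  unfold xonly_df; simpl. intros H. apply List.Forall_app; split; auto.
  apply List.Forall_map. eapply List.Forall_impl; [|exact H]. intros; apply xonly_incr0; auto.
Qed.

Lemma xonly_df_iter N n F : xonly_df N F -> xonly_df N (Nat.iter n (Dt 0) F).
Proof. intros H; induction n; simpl; auto. apply xonly_df_Dt0; auto. Qed.

Lemma Dmulti_xproj N I Q v : (0 < N)%nat -> xonly N I -> regular_df N Q -> xonly_df N Q ->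
  fn (Dmulti I Q) (xproj N v) = fn (Dmulti I Q) v.
Proof.
  intros HN HI WQ XQ. rewrite (xonly_eq_xMI N I), Dmulti_xMI by auto.
  apply (depends_on_xproj N (supp (Nat.iter (ordMI I) (Dt 0) Q))).
  - apply (regular_df_iter N); auto.
  - apply xonly_df_iter; auto.
Qed.

Lemma Dt_time_xproj N j G v : (0 < j < N)%nat ->
  List.Forall (fun I => length I = N) (supp G) -> fn (Dt j G) (xproj N v) = 0.
Proof.
  intros Hj HG. simpl. apply sumL_zero. intros I HI. rewrite Forall_forall in HG.
  unfold xproj. case_eq (xonlyb N (incr j I)); intro E; [|ring].
  exfalso. apply (not_xonly_incr N j I); auto. apply xonly_xonlyb; auto.
Qed.

Definition xrestr (N : nat) (A : DF) : DF :=
  mkDF (filter (xonlyb N) (supp A)) (fun v => fn A (xproj N v)).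

Lemma regular_df_xrestr N A : is_dfun N A -> regular_df N (xrestr N A).
Proof.
  intros HA. split.
  - intros v w H. simpl. apply HA. intros I HI. unfold xproj.
    case_eq (xonlyb N I); intro E; auto. apply H. apply filter_In; auto.
  - apply (regular_xproj N (fn A)). apply (regular_smooth_on N (supp A)). apply HA.
Qed.

Lemma xonly_df_xrestr N A : xonly_df N (xrestr N A).
Proof.
  apply List.Forall_forall. intros I HI. apply filter_In in HI. apply xonly_xonlyb; tauto.
Qed.

Lemma Dt0_xproj N A v : fn (Dt 0 A) (xproj N v) = fn (Dt 0 (xrestr N A)) v.
Proof.
  change (sumL (supp A) (fun I => xproj N v (incr 0 I) * pd I (fn A) (xproj N v)) =
    sumL (filter (xonlyb N) (supp A)) (fun I => v (incr 0 I) * pd I (fun w => fn A (xproj N w)) v)).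
  symmetry. rewrite (sumL_ext _ _ (fun I => xproj N v (incr 0 I) * pd I (fn A) (xproj N v))).
  - apply sumL_eq_on_support. intros I HI. rewrite filter_In. split; [tauto|]. intros H; split; auto.
    unfold xproj in HI. case_eq (xonlyb N (incr 0 I)); intro E; rewrite E in HI; [|lra].
    apply xonly_xonlyb, (xonly_incr0_inv N), xonly_xonlyb; auto.
  - intros I HI. rewrite filter_In in HI. destruct HI as [_ HI].
    rewrite pd_xproj, HI. unfold xproj.
    rewrite (proj1 (xonly_xonlyb N (incr 0 I))); auto. apply xonly_incr0, xonly_xonlyb; auto.
Qed.

Lemma regular_df_Lag N p h i : regular_df N p -> regular_df N h -> regular_df N (Lag N p h i).
Proof.
  intros. apply regular_df_sub; auto. apply regular_df_mul; auto. apply regular_df_coord.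
Qed.

Lemma pd_Lag N p h j I : regular N (fn p) -> regular N (fn h) ->
  pd I (fn (Lag N p h j)) = fun v =>
    pd I (fn p) v * v (eMI N j) + fn p v * (if MI_eq_dec (eMI N j) I then 1 else 0) - pd I (fn h) v.
Proof.
  intros Hp Hh. change (fn (Lag N p h j)) with (fun v => fn p v * v (eMI N j) - fn h v).
  rewrite (pd_sub N (fun v => fn p v * v (eMI N j)) (fn h)), (pd_mul N (fn p) (fun v => v (eMI N j))),
    pd_coord; auto using regular_coord, regular_mul.
Qed.

Lemma Dt_Lag N p h i j v : regular_df N p -> regular_df N h ->
  fn (Dt i (Lag N p h j)) v =
  fn (Dt i p) v * v (eMI N j) + fn p v * v (incr i (eMI N j)) - fn (Dt i h) v.
Proof.
  intros Wp Wh. unfold Lag.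
  rewrite (Dt_sub N), (Dt_mul N), Dt_coord; auto using regular_df_coord, regular_df_mul.
Qed.

(* On the x-jet, [u_{t_j} = 0] and [D_j Q = 0], so only [- pr(Q) h] survives. *)
Lemma prD_Lag_xproj N Q p h j v : (0 < j < N)%nat ->
  is_dfun N Q -> xonly_df N Q -> is_dfun N p -> xonly_df N p -> is_dfun N h -> xonly_df N h ->
  fn (prD Q (Lag N p h j)) (xproj N v) = - fn (prD Q h) v.
Proof.
  intros Hj HQ XQ Hp Xp Hh Xh.
  destruct (is_dfun_regular_df N Q HQ) as [DQ GQ].
  destruct (is_dfun_regular_df N p Hp) as [Dp Gp].
  destruct (is_dfun_regular_df N h Hh) as [Dh Gh].
  assert (Xp' := Xp); assert (Xh' := Xh). unfold xonly_df in Xp', Xh'.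
  rewrite Forall_forall in Xp', Xh'.
  assert (Hnot : ~ In (eMI N j) (supp h)) by (intros Hin; apply (not_xonly_eMI N j); auto).
  change (sumL ((supp p ++ [eMI N j]) ++ supp h)
            (fun I => fn (Dmulti I Q) (xproj N v) * pd I (fn (Lag N p h j)) (xproj N v))
          = - sumL (supp h) (fun I => fn (Dmulti I Q) v * pd I (fn h) v)).
  rewrite <- sumL_opp.
  transitivity (sumL ((supp p ++ [eMI N j]) ++ supp h) (fun I => - (fn (Dmulti I Q) v * pd I (fn h) v))).
  - apply sumL_ext. intros I HI. destruct (MI_eq_dec I (eMI N j)) as [E|E].
    + subst I. rewrite Dmulti_eMI, (Dt_time_xproj N j Q), (pd_not_in (supp h) (fn h));
        auto; try lia; try ring. apply HQ.
    + assert (Xi : xonly N I).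
      { rewrite !in_app_iff in HI. simpl in HI. destruct HI as [[H|[H|H]]|H]; auto; congruence || tauto. }
      rewrite (pd_Lag N); auto. destruct (MI_eq_dec (eMI N j) I) as [E'|E']; [congruence|].
      replace (xproj N v (eMI N j)) with 0.
      2:{ unfold xproj. case_eq (xonlyb N (eMI N j)); intro X; auto.
          exfalso. apply (not_xonly_eMI N j); auto. apply xonly_xonlyb; auto. }
      rewrite (depends_on_xproj N (supp h) (pd I (fn h))) by (auto; apply depends_on_pd; auto).
      rewrite (Dmulti_xproj N) by (auto; try lia; apply is_dfun_regular_df; auto). ring.
  - apply sumL_eq_on_support. intros I HI.
    assert (In I (supp h)).
    { destruct (in_dec MI_eq_dec I (supp h)); auto. exfalso. apply HI.
      rewrite (pd_not_in (supp h) (fn h)); auto. ring. }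
    rewrite !in_app_iff. tauto.
Qed.

(* Evaluating the symmetry condition on the x-jet kills the [D_j B] term. *)
Lemma prD_h_exact N Q p h j A B v : (0 < j < N)%nat ->
  is_dfun N Q -> xonly_df N Q -> is_dfun N p -> xonly_df N p -> is_dfun N h -> xonly_df N h ->
  is_dfun N B ->
  (forall w, fn (prD Q (Lag N p h j)) w = fn (Dt 0 A) w + fn (Dt j B) w) ->
  fn (prD Q h) v = - fn (Dt 0 (xrestr N A)) v.
Proof.
  intros Hj HQ XQ Hp Xp Hh Xh HB Hsym.
  rewrite <- (Dt0_xproj N A v), <- (Rplus_0_r (fn (Dt 0 A) (xproj N v))).
  rewrite <- (Dt_time_xproj N j B v), <- Hsym, (prD_Lag_xproj N); auto. ring. apply HB.
Qed.

Lemma Dt_on_shell N Q i X v : xonly_df N X -> on_shell N Q v -> (1 <= i < N)%nat ->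
  fn (Dt i X) v = fn (prD (Q i) X) v.
Proof.
  intros Xx Hv Hi.
  change (sumL (supp X) (fun I => v (incr i I) * pd I (fn X) v) =
          sumL (supp X) (fun I => fn (Dmulti I (Q i)) v * pd I (fn X) v)).
  apply sumL_ext. intros I HI. unfold xonly_df in Xx; rewrite List.Forall_forall in Xx.
  rewrite Hv; auto. apply Xx; auto.
Qed.

(** * Integration by parts in x *)

Fixpoint green_flux (a : nat) (f g : DF) : DF :=
  match a with
  | O => constDF 0
  | S a' => addDF (mulDF (constDF ((-1) ^ S a')) (mulDF g (Nat.iter a' (Dt 0) f)))
                  (green_flux a' f (Dt 0 g))
  end.

Lemma regular_df_green_flux N a f g :
  regular_df N f -> regular_df N g -> regular_df N (green_flux a f g).
Proof.
  revert g; induction a; intros g Hf Hg; simpl; [apply regular_df_const|].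
  apply regular_df_add; [|apply IHa; auto; apply regular_df_Dt; auto].
  apply regular_df_mul; [apply regular_df_const|].
  apply regular_df_mul; auto. apply regular_df_iter; auto.
Qed.

Lemma xonly_df_green_flux N a f g :
  xonly_df N f -> xonly_df N g -> xonly_df N (green_flux a f g).
Proof.
  revert g; induction a; intros g Hf Hg; [constructor|].
  unfold xonly_df. simpl supp.
  apply List.Forall_app; split.
  - apply List.Forall_app; split; [exact Hg|apply (xonly_df_iter N a f Hf)].
  - apply IHa; auto. apply xonly_df_Dt0; auto.
Qed.

Lemma Dt0_green_flux N a f g v : regular_df N f -> regular_df N g ->
  fn (Dt 0 (green_flux a f g)) v =
  (-1) ^ a * fn g v * fn (Nat.iter a (Dt 0) f) v - fn f v * fn (Nat.iter a (Dt 0) g) v.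
Proof.
  revert g; induction a; intros g Hf Hg; [simpl green_flux; rewrite Dt_const; simpl; ring|]. simpl green_flux.
  assert (Wfa := regular_df_iter N 0 a f Hf).
  assert (Wg := regular_df_mul N g _ Hg Wfa).
  rewrite (Dt_add N), (Dt_mul N), (Dt_mul N 0 g), Dt_const, IHa; auto using regular_df_const.
  2: apply regular_df_Dt; auto.
  2: apply regular_df_mul; auto using regular_df_const.
  2: apply regular_df_green_flux; auto; apply regular_df_Dt; auto.
  rewrite <- (@Nat.iter_succ_r a DF (Dt 0) g).
  change (fn (Dt 0 (Nat.iter a (Dt 0) f)) v) with (fn (Nat.iter (S a) (Dt 0) f) v).
  simpl fn. simpl pow. ring.
Qed.

Definition sumDF (l : list nat) (H : nat -> DF) : DF :=
  fold_right (fun a acc => addDF (H a) acc) (constDF 0) l.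

Lemma regular_df_sumDF N l H : (forall a, regular_df N (H a)) -> regular_df N (sumDF l H).
Proof. intros W; induction l; simpl; [apply regular_df_const|apply regular_df_add; auto]. Qed.

Lemma xonly_df_sumDF N l H : (forall a, xonly_df N (H a)) -> xonly_df N (sumDF l H).
Proof. intros W; induction l; [constructor|apply List.Forall_app; split; auto; apply W]. Qed.

Lemma Dt0_sumDF N M H v : (forall a, regular_df N (H a)) ->
  fn (Dt 0 (sumDF (seq 0 (S M)) H)) v = sumN M (fun a => fn (Dt 0 (H a)) v).
Proof.
  intros W. unfold sumN. induction (seq 0 (S M)); [reflexivity|]. simpl sumDF.
  rewrite (Dt_add N), IHl; auto. apply regular_df_sumDF; auto.
Qed.

Lemma sumN_xMI N M Sl g : (0 < N)%nat ->
  (forall I, In I Sl -> xonly N I /\ (ordMI I <= M)%nat) -> (forall I, g I <> 0 -> In I Sl) ->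
  sumN M (fun a => g (xMI N a)) = sumL Sl g.
Proof.
  intros HN HS Hg. unfold sumN.
  transitivity (sumL (map (xMI N) (seq 0 (S M))) g).
  - unfold sumL. rewrite nodup_fixed_point.
    + clear. induction (seq 0 (S M)); simpl; auto. rewrite IHl; auto.
    + apply FinFun.Injective_map_NoDup; [intros a b; apply xMI_inj; auto|apply seq_NoDup].
  - apply sumL_eq_on_support. intros I HI. specialize (Hg I HI). split; auto.
    intros _. destruct (HS I Hg) as [X O]. rewrite (xonly_eq_xMI N I) by auto.
    apply in_map, in_seq. lia.
Qed.

Lemma prD_xonly_sumN N M Q X v : (0 < N)%nat -> regular_df N X -> xonly_df N X ->
  (forall I, In I (supp X) -> (ordMI I <= M)%nat) ->
  fn (prD Q X) v = sumN M (fun a => fn (Nat.iter a (Dt 0) Q) v * pd (xMI N a) (fn X) v).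
Proof.
  intros HN WX Xx HM.
  change (fn (prD Q X) v) with (sumL (supp X) (fun I => fn (Dmulti I Q) v * pd I (fn X) v)).
  rewrite <- (sumN_xMI N M (supp X)); auto.
  - apply sumN_ext. intros a _. rewrite Dmulti_xMI; auto.
  - intros I HI. unfold xonly_df in Xx; rewrite List.Forall_forall in Xx. split; auto.
  - intros I HI. destruct (in_dec MI_eq_dec I (supp X)); auto. exfalso; apply HI.
    rewrite (pd_not_in (supp X) (fn X)); [ring|apply WX|auto].
Qed.

(** * The Euler-Lagrange equations on shell *)

Lemma applyOp_vanishing N E G v : is_DOp N E ->
  (forall K, length K = N -> fn (Dmulti K G) v = 0) -> fn (applyOp E G) v = 0.
Proof.
  intros HE H. induction E as [|[K a] E IH]; [reflexivity|].
  apply Forall_cons_iff in HE as [[HK _] HE]. simpl in HK.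
  change (fn a v * fn (Dmulti K G) v + fn (applyOp E G) v = 0).
  rewrite H, IH; auto. ring.
Qed.

Lemma Dmulti_evolution_on_shell N Qi i v K : (0 < i < N)%nat -> regular_df N Qi ->
  length K = N -> v (incr i K) = fn (Dmulti K Qi) v ->
  fn (Dmulti K (subDF (coordF (eMI N i)) Qi)) v = 0.
Proof.
  intros Hi HQ HK Hs. unfold Dmulti in *.
  rewrite (Dmulti_aux_sub N), Dmulti_aux_coord; auto using regular_df_coord.
  simpl. unfold eMI. rewrite shiftMI_incr, shiftMI_zeroMI; auto. lra.
Qed.

(* Apart from [u_{t_i}], [L_{1i}] depends only on x-only coordinates. *)
Lemma not_in_supp_Lag N p hi i a b : (0 < i < N)%nat -> xonly_df N p -> xonly_df N hi ->
  ((2 <= b)%nat \/ (b = 1 /\ 1 <= a)%nat) ->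
  ~ In (Nat.iter a (incr 0) (Nat.iter b (incr i) (zeroMI N))) (supp (Lag N p hi i)).
Proof.
  intros Hi Xp Xh Hab Hin. unfold xonly_df in Xp, Xh. rewrite List.Forall_forall in Xp, Xh.
  assert (Hx : forall X, (forall x, In x X -> xonly N x) ->
            ~ In (Nat.iter a (incr 0) (Nat.iter b (incr i) (zeroMI N))) X).
  { intros X HX HinX. destruct (HX _ HinX) as [_ H]. specialize (H i ltac:(lia)).
    rewrite nth_iter_incr_0_i in H by lia.
    destruct (Nat.eqb_spec i 0); [lia|]. rewrite Nat.eqb_refl in H. lia. }
  simpl in Hin. rewrite !in_app_iff in Hin. simpl in Hin.
  destruct Hin as [[H|[H|H]]|H]; [apply (Hx _ Xp H)| |exact H|apply (Hx _ Xh H)].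
  assert (X0 := f_equal (fun I => nth 0 I 0%nat) H).
  assert (Xi := f_equal (fun I => nth i I 0%nat) H). simpl in X0, Xi.
  rewrite nth_iter_incr_0_i in X0, Xi by lia. unfold eMI in X0, Xi.
  rewrite nth_incr in X0, Xi by (rewrite length_zeroMI; lia). rewrite nth_zeroMI in X0, Xi.
  simpl in X0. destruct (Nat.eqb_spec i 0); [lia|]. rewrite Nat.eqb_refl in Xi.
  destruct i; [lia|]. simpl in X0. lia.
Qed.

(* Only the terms [(a, 0)] and [(0, 1)] of the double sum survive. *)
Lemma varder_Lag N p hi i v : (0 < i < N)%nat ->
  regular_df N p -> xonly_df N p -> regular_df N hi -> xonly_df N hi ->
  varder N 0 i (Lag N p hi i) v =
  sumN (maxord (Lag N p hi i))
    (fun a => (-1) ^ a * fn (Nat.iter a (Dt 0) (pdF (xMI N a) (Lag N p hi i))) v)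
  - fn (Dt i p) v.
Proof.
  intros Hi Wp Xp Wh Xh. set (L := Lag N p hi i).
  assert (WL : regular_df N L) by (apply regular_df_Lag; auto).
  set (term := fun a b => (-1) ^ (a + b) * fn (Nat.iter a (Dt 0) (Nat.iter b (Dt i)
                 (pdF (Nat.iter a (incr 0) (Nat.iter b (incr i) (zeroMI N))) L))) v).
  assert (Hzero : forall a b, ((2 <= b)%nat \/ (b = 1 /\ 1 <= a)%nat) -> term a b = 0).
  { intros a b Hab. unfold term.
    assert (Z : fn (pdF (Nat.iter a (incr 0) (Nat.iter b (incr i) (zeroMI N))) L) = fun _ => 0).
    { apply functional_extensionality; intro w. apply (pd_not_in (supp L)); [apply WL|].
      apply not_in_supp_Lag; auto. }
    rewrite (iter_Dt_zero N 0 a); [ring|apply regular_df_iter, regular_df_pdF; auto|].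
    apply (iter_Dt_zero N); auto. apply regular_df_pdF; auto. }
  assert (T01 : term 0%nat 1%nat = - fn (Dt i p) v).
  { unfold term. simpl Nat.iter. rewrite (Dt_ext N i _ p); auto using regular_df_pdF.
    - simpl pow. ring.
    - change (pd (eMI N i) (fn L) = fn p). unfold L. rewrite (pd_Lag N); try apply Wp; try apply Wh.
      apply functional_extensionality; intro w.
      rewrite (pd_not_in (supp p) (fn p)), (pd_not_in (supp hi) (fn hi)); try apply Wp; try apply Wh;
        try (intro H; unfold xonly_df in *; rewrite List.Forall_forall in *;
             apply (not_xonly_eMI N i); auto).
      destruct MI_eq_dec; [ring|congruence]. }
  assert (HM : (1 <= maxord L)%nat).
  { rewrite <- (ordMI_eMI N i) by lia. apply maxord_ge. simpl. rewrite !in_app_iff. simpl; tauto. }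
  change (varder N 0 i L v) with (sumN (maxord L) (fun a => sumN (maxord L) (fun b => term a b))).
  rewrite (sumN_ext _ _ (fun a => term a 0%nat + term a 1%nat)) by (intros; apply sumN_first_two; auto).
  rewrite sumN_plus, (sumN_first _ (fun a => term a 1%nat)), T01 by (intros; apply Hzero; auto).
  unfold term. rewrite (sumN_ext _ _ (fun a => (-1) ^ a * fn (Nat.iter a (Dt 0) (pdF (xMI N a) L)) v)).
  - ring.
  - intros a _. rewrite Nat.add_0_r. reflexivity.
Qed.

Lemma pd_xMI_Lag N p hi i a : (0 < i < N)%nat -> regular_df N p -> regular_df N hi ->
  pd (xMI N a) (fn (Lag N p hi i)) =
  fun w => pd (xMI N a) (fn p) w * w (eMI N i) - pd (xMI N a) (fn hi) w.
Proof.
  intros Hi Wp Wh. rewrite (pd_Lag N); try apply Wp; try apply Wh.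
  apply functional_extensionality; intro w. destruct MI_eq_dec as [E|E]; [|ring].
  exfalso. apply (not_xonly_eMI N i); auto. rewrite E. apply xonly_xMI.
Qed.

Lemma iter_Dt_mul_succ N k m c X : regular_df N c -> regular_df N X ->
  fn (Nat.iter (S m) (Dt k) (mulDF c X)) =
  fn (Nat.iter m (Dt k) (addDF (mulDF (Dt k c) X) (mulDF c (Dt k X)))).
Proof.
  intros Wc WX. rewrite Nat.iter_succ_r. apply (iter_Dt_ext N).
  - apply regular_df_Dt, regular_df_mul; auto.
  - apply regular_df_add; apply regular_df_mul; auto using regular_df_Dt.
  - apply (Dt_mul N); auto.
Qed.

(* Replacing [u_{1^n t_i}] by [D_1^n Q_i] commutes with [D_1]. *)
Lemma iter_Dt0_mul_on_shell N i Qi v : regular_df N Qi ->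
  (forall n, v (Nat.iter n (incr 0) (eMI N i)) = fn (Nat.iter n (Dt 0) Qi) v) ->
  forall m c n, regular_df N c ->
  fn (Nat.iter m (Dt 0) (mulDF c (coordF (Nat.iter n (incr 0) (eMI N i))))) v =
  fn (Nat.iter m (Dt 0) (mulDF c (Nat.iter n (Dt 0) Qi))) v.
Proof.
  intros WQ HU m. induction m; intros c n Wc; [simpl; rewrite HU; reflexivity|].
  assert (WQn := regular_df_iter N 0 n Qi WQ).
  assert (Wu := regular_df_coord N (Nat.iter n (incr 0) (eMI N i))).
  assert (Wc' := regular_df_Dt N 0 c Wc).
  rewrite !(iter_Dt_mul_succ N), !(iter_Dt_add N); auto using regular_df_mul, regular_df_Dt.
  rewrite (iter_Dt_ext N 0 m (mulDF c (Dt 0 (coordF _)))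
             (mulDF c (coordF (Nat.iter (S n) (incr 0) (eMI N i))))).
  - rewrite !IHm; auto.
  - apply regular_df_mul, regular_df_Dt; auto.
  - apply regular_df_mul, regular_df_coord; auto.
  - cbn [mulDF fn]. rewrite Dt_coord. reflexivity.
Qed.

(* [f_a = dL_{1i}/du_{1^a}], with [u_{t_i}] replaced by [Q_i] *)
Definition el_coeff (N : nat) (p hi Qi : DF) (a : nat) : DF :=
  subDF (mulDF (pdF (xMI N a) p) Qi) (pdF (xMI N a) hi).

Lemma regular_df_el_coeff N p hi Qi a : regular_df N p -> regular_df N hi -> regular_df N Qi ->
  regular_df N (el_coeff N p hi Qi a).
Proof.
  intros. apply regular_df_sub; [apply regular_df_mul|]; auto using regular_df_pdF.
Qed.

Lemma xonly_df_el_coeff N p hi Qi a : xonly_df N p -> xonly_df N hi -> xonly_df N Qi ->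
  xonly_df N (el_coeff N p hi Qi a).
Proof. intros. repeat (apply List.Forall_app; split); auto. Qed.

Lemma EL_on_shell N p hi Qi E i v : (0 < i < N)%nat ->
  regular_df N p -> xonly_df N p -> regular_df N hi -> xonly_df N hi -> regular_df N Qi ->
  is_DOp N E ->
  (forall w, varder N 0 i (Lag N p hi i) w = fn (applyOp E (subDF (coordF (eMI N i)) Qi)) w) ->
  (forall K, length K = N -> v (incr i K) = fn (Dmulti K Qi) v) ->
  sumN (maxord (Lag N p hi i)) (fun a => (-1) ^ a * fn (Nat.iter a (Dt 0) (el_coeff N p hi Qi a)) v)
  = fn (Dt i p) v.
Proof.
  intros Hi Wp Xp Wh Xh WQ HE HEL Hshell.
  assert (Hvar : varder N 0 i (Lag N p hi i) v = 0).
  { rewrite HEL. apply (applyOp_vanishing N); auto. intros K HK.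
    apply (Dmulti_evolution_on_shell N); auto. }
  assert (HU : forall n, v (Nat.iter n (incr 0) (eMI N i)) = fn (Nat.iter n (Dt 0) Qi) v).
  { intros n. unfold eMI. rewrite iter_incr_comm, Hshell.
    - fold (xMI N n). rewrite Dmulti_xMI; auto. lia.
    - rewrite length_iter_incr, length_zeroMI; auto. }
  rewrite (varder_Lag N) in Hvar; auto.
  enough (Heq : forall a, fn (Nat.iter a (Dt 0) (pdF (xMI N a) (Lag N p hi i))) v =
                          fn (Nat.iter a (Dt 0) (el_coeff N p hi Qi a)) v).
  { rewrite (sumN_ext _ _ _ (fun a _ => f_equal (Rmult ((-1) ^ a)) (Heq a))) in Hvar. lra. }
  intros a.
  assert (Wp' := regular_df_pdF N (xMI N a) p Wp).
  assert (Wh' := regular_df_pdF N (xMI N a) hi Wh).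
  rewrite (iter_Dt_ext N 0 a _ (subDF (mulDF (pdF (xMI N a) p) (coordF (eMI N i))) (pdF (xMI N a) hi))).
  - unfold el_coeff. rewrite !(iter_Dt_sub N); auto using regular_df_mul, regular_df_coord.
    change (eMI N i) with (Nat.iter 0 (incr 0) (eMI N i)).
    rewrite (iter_Dt0_mul_on_shell N i Qi v WQ HU a _ 0%nat Wp'). reflexivity.
  - apply regular_df_pdF, regular_df_Lag; auto.
  - apply regular_df_sub; auto. apply regular_df_mul; auto. apply regular_df_coord.
  - apply (pd_xMI_Lag N); auto.
Qed.

(** * The conserved current *)

Definition x_dfun (N : nat) (F : DF) : Prop := is_dfun N F /\ xonly_df N F.

Definition noether_flux (N : nat) (p hi Qi Qj : DF) (M : nat) : DF :=
  sumDF (seq 0 (S M)) (fun a => green_flux a (el_coeff N p hi Qi a) Qj).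

Lemma regular_df_noether_flux N p hi Qi Qj M :
  regular_df N p -> regular_df N hi -> regular_df N Qi -> regular_df N Qj ->
  regular_df N (noether_flux N p hi Qi Qj M).
Proof.
  intros. apply regular_df_sumDF. intros a.
  apply regular_df_green_flux; auto. apply regular_df_el_coeff; auto.
Qed.

Lemma xonly_df_noether_flux N p hi Qi Qj M :
  xonly_df N p -> xonly_df N hi -> xonly_df N Qi -> xonly_df N Qj ->
  xonly_df N (noether_flux N p hi Qi Qj M).
Proof.
  intros. apply xonly_df_sumDF. intros a.
  apply xonly_df_green_flux; auto. apply xonly_df_el_coeff; auto.
Qed.

Lemma Dt0_noether_flux N p hi Qi Qj M v : (0 < N)%nat ->
  regular_df N p -> xonly_df N p -> regular_df N hi -> xonly_df N hi ->
  regular_df N Qi -> regular_df N Qj ->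
  (forall I, In I (supp p) -> (ordMI I <= M)%nat) ->
  (forall I, In I (supp hi) -> (ordMI I <= M)%nat) ->
  fn (Dt 0 (noether_flux N p hi Qi Qj M)) v =
  fn Qj v * sumN M (fun a => (-1) ^ a * fn (Nat.iter a (Dt 0) (el_coeff N p hi Qi a)) v)
  - (fn Qi v * fn (prD Qj p) v - fn (prD Qj hi) v).
Proof.
  intros HN Wp Xp Wh Xh WQi WQj Mp Mh. unfold noether_flux.
  rewrite (Dt0_sumDF N) by (intros a; apply regular_df_green_flux; auto; apply regular_df_el_coeff; auto).
  rewrite (prD_xonly_sumN N M Qj p), (prD_xonly_sumN N M Qj hi) by auto.
  rewrite <- !sumN_scal, <- !sumN_minus. apply sumN_ext. intros a _.
  rewrite (Dt0_green_flux N); auto using regular_df_el_coeff.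
  unfold el_coeff. simpl fn. ring.
Qed.

Lemma Dt0_current_on_shell N Q p hi hj A B E i j v :
  (0 < i < N)%nat -> (0 < j < N)%nat ->
  x_dfun N (Q i) -> x_dfun N (Q j) -> x_dfun N p -> x_dfun N hi -> x_dfun N hj ->
  is_dfun N A -> is_dfun N B -> is_DOp N E ->
  (forall w, varder N 0 i (Lag N p hi i) w = fn (applyOp E (subDF (coordF (eMI N i)) (Q i))) w) ->
  (forall w, fn (prD (Q i) (Lag N p hj j)) w = fn (Dt 0 A) w + fn (Dt j B) w) ->
  on_shell N Q v ->
  fn (Dt 0 (addDF (noether_flux N p hi (Q i) (Q j) (maxord (Lag N p hi i))) (xrestr N A))) v =
  fn (Dt i (Lag N p hj j)) v - fn (Dt j (Lag N p hi i)) v.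
Proof.
  intros Hi Hj [HQi XQi] [HQj XQj] [Hp Xp] [Hhi Xhi] [Hhj Xhj] HA HB HE HEL Hsym Hv.
  assert (WQi := is_dfun_regular_df N _ HQi). assert (WQj := is_dfun_regular_df N _ HQj).
  assert (Wp := is_dfun_regular_df N _ Hp). assert (Whi := is_dfun_regular_df N _ Hhi).
  assert (Whj := is_dfun_regular_df N _ Hhj).
  assert (Hbound : forall I, In I (supp p) \/ In I (supp hi) -> (ordMI I <= maxord (Lag N p hi i))%nat).
  { intros I HI. apply maxord_ge. simpl. rewrite !in_app_iff. tauto. }
  assert (Hu : forall k, (1 <= k < N)%nat -> v (eMI N k) = fn (Q k) v).
  { intros k Hk. unfold eMI. rewrite Hv, Dmulti_zeroMI; auto. apply length_zeroMI. }
  rewrite (Dt_add N), (Dt0_noether_flux N), (EL_on_shell N p hi (Q i) E i v); auto;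
    try apply regular_df_noether_flux; try apply regular_df_xrestr; auto; try lia.
  rewrite (Dt_Lag N p hj i j v), (Dt_Lag N p hi j i v), (Dt_on_shell N Q j p v),
    (Dt_on_shell N Q j hi v), (Dt_on_shell N Q i hj v), (prD_h_exact N (Q i) p hj j A B v); auto; try lia.
  unfold eMI. rewrite incr_comm. fold (eMI N i) (eMI N j). rewrite !Hu by lia. ring.
Qed.

Theorem lemma1 (N : nat) (HN : (3 <= N)%nat)
  (Q : nat -> DF) (p : DF) (h : nat -> DF) (E : DOp) :
  (* Q_i, p, h_i smooth and depending only on u, u_1, u_11, ... *)
  (forall i, (1 <= i < N)%nat ->
     is_dfun N (Q i) /\ List.Forall (xonly N) (supp (Q i))) ->
  is_dfun N p -> List.Forall (xonly N) (supp p) ->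
  (forall i, (1 <= i < N)%nat ->
     is_dfun N (h i) /\ List.Forall (xonly N) (supp (h i))) ->
  (* Euler-Lagrange equations are E_p (u_{t_i} - Q_i) = 0 *)
  is_DOp N E ->
  (forall i, (1 <= i < N)%nat -> forall v : J,
     varder N 0 i (Lag N p (h i) i) v
     = fn (applyOp E (subDF (coordF (eMI N i)) (Q i))) v) ->
  (* the prolonged vector fields commute pairwise *)
  (forall i j, (1 <= i < N)%nat -> (1 <= j < N)%nat ->
     forall F : DF, is_dfun N F -> forall v : J,
       fn (prD (Q i) (prD (Q j) F)) v = fn (prD (Q j) (prD (Q i) F)) v) ->
  (* variational symmetries *)
  (forall i j, (1 <= i < N)%nat -> (1 <= j < N)%nat -> i <> j ->
     exists A B : DF, is_dfun N A /\ is_dfun N B /\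
       forall v : J,
         fn (prD (Q i) (Lag N p (h j) j)) v = fn (Dt 0 A) v + fn (Dt j B) v) ->
  forall i j, (1 <= i < N)%nat -> (1 <= j < N)%nat -> i <> j ->
    exists F : DF, is_dfun N F /\ List.Forall (xonly N) (supp F) /\
      forall v : J, on_shell N Q v ->
        fn (Dt 0 F) v = fn (Dt i (Lag N p (h j) j)) v - fn (Dt j (Lag N p (h i) i)) v.
Proof.
  intros HQ Hp Xp Hh HE HEL _ Hsym i j Hi Hj Hij.
  destruct (Hsym i j Hi Hj Hij) as [A [B [HA [HB HAB]]]].
  destruct (HQ i Hi) as [HQi XQi], (HQ j Hj) as [HQj XQj].
  destruct (Hh i Hi) as [Hhi Xhi], (Hh j Hj) as [Hhj Xhj].
  set (F := addDF (noether_flux N p (h i) (Q i) (Q j) (maxord (Lag N p (h i) i))) (xrestr N A)).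
  assert (XF : xonly_df N F).
  { apply List.Forall_app; split; [apply xonly_df_noether_flux|apply xonly_df_xrestr]; auto. }
  exists F. split; [|split; [exact XF|]].
  - apply regular_df_is_dfun; auto. apply regular_df_add; [|apply regular_df_xrestr; auto].
    apply regular_df_noether_flux; apply is_dfun_regular_df; auto.
  - intros v Hv. apply (Dt0_current_on_shell N Q p (h i) (h j) A B E); auto; try lia; split; auto.
Qed.
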